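(* Let $A=\{0,1,2\}$ and let $T\colon A^4\to A$ be given by $T(1,1,2,2)=T(1,2,1,2)=1$ and $T(\mathbf{x})=0$ for all other $\mathbf{x}\in A^4$. Let $g\in\{T\}^{*(1)*(2)}$. Then: (a) if $g(1,2)=2$ then $g(0,a)=a$ for all $a\in A$; (b) if $g(2,1)=2$ then $g(a,0)=a$ for all $a\in A$; (c) if $g(1,2)\in\{0,1\}$ then $g(0,a)=0$ for all $a\in A$; (d) if $g(2,1)\in\{0,1\}$ then $g(a,0)=0$ for all $a\in A$.
   Context: An $m$-ary $g$ commutes with an $n$-ary $h$ if $g\bigl((h((x_{ij})_{j}))_{i}\bigr)=h\bigl((g((x_{ij})_{i}))_{j}\bigr)$ for all $(x_{ij})\in A^{m\times n}$. For a set $F$ of finitary operations on $A$ (positive arity), $F^*$ is the set of all such operations commuting with every member of $F$, and $F^{(n)}$ is the set of $n$-ary members of $F$; superscripts apply from left to right, so $\{T\}^{*(1)*(2)}=(((\{T\}^* )^{(1)})^* )^{(2)}$. *)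

From mathcomp Require Import all_boot.
Set Implicit Arguments. Unset Strict Implicit. Unset Printing Implicit Defensive.

(* A finitary operation on A: an arity n together with a map A^n -> A
   (A^n represented as functions 'I_n -> A). *)
Definition op (A : Type) := {n : nat & ('I_n -> A) -> A}.

Definition mkop (A : Type) (n : nat) (f : ('I_n -> A) -> A) : op A :=
  existT (fun k => ('I_k -> A) -> A) n f.

Definition commutes (A : Type) (g h : op A) : Prop :=
  forall x : 'I_(projT1 g) -> 'I_(projT1 h) -> A,
    projT2 g (fun i => projT2 h (x i)) = projT2 h (fun j => projT2 g (fun i => x i j)).

Definition star (A : Type) (F : op A -> Prop) : op A -> Prop :=
  fun g => 0 < projT1 g /\ forall h, F h -> commutes g h.

Definition arity_part (A : Type) (F : op A -> Prop) (n : nat) : op A -> Prop :=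
  fun g => F g /\ projT1 g = n.

Definition A3 := 'I_3.

Definition T (x : 'I_4 -> A3) : A3 :=
  if [&& val (x (inord 0)) == 1, val (x (inord 1)) == 1,
         val (x (inord 2)) == 2 & val (x (inord 3)) == 2]
  || [&& val (x (inord 0)) == 1, val (x (inord 1)) == 2,
         val (x (inord 2)) == 1 & val (x (inord 3)) == 2]
  then inord 1 else inord 0.

Definition singletonT : op A3 -> Prop := fun h => h = mkop T.

Definition clone_T12 : op A3 -> Prop :=
  arity_part (star (arity_part (star singletonT) 1)) 2.

Definition pair2 (a b : A3) : 'I_2 -> A3 := fun i => if val i == 0 then a else b.

Definition e (k : nat) : A3 := inord k.

(* The unary maps [at_two c] (send 2 to c and everything else to 0) commute
   with T: T never takes the value 2, and T vanishes on every tuple with at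
   most one nonzero value, since its two nonzero points use both values 1
   and 2.  So they belong to {T}^{*(1)}, and every g in {T}^{*(1)*(2)}
   commutes with them.  Applied to (1,2) and (2,1) this gives
   g(0,c) = at_two c (g(1,2)) and g(c,0) = at_two c (g(2,1)), from which all
   four claims are read off. *)
From Stdlib Require Import FunctionalExtensionality.
From mathcomp Require Import all_boot.

Set Implicit Arguments.
Unset Strict Implicit.
Unset Printing Implicit Defensive.

Definition unary_op (A : Type) (f : A -> A) : op A :=
  mkop (fun x : 'I_1 -> A => f (x ord0)).

Lemma commutes_unary_l (A : Type) (f : A -> A) (h : op A) :
  (forall x, f (projT2 h x) = projT2 h (f \o x)) -> commutes (unary_op f) h.
Proof. by move=> fh x; apply: fh. Qed.

Lemma commutes_unary_r (A : Type) (n : nat) (g : ('I_n -> A) -> A) (f : A -> A) :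
  commutes (mkop g) (unary_op f) -> forall x, g (f \o x) = f (g x).
Proof. by move=> gf x; apply: (gf (fun i _ => x i)). Qed.

Lemma unary_op_star1 (A : Type) (F : op A -> Prop) (f : A -> A) :
  (forall h, F h -> commutes (unary_op f) h) -> arity_part (star F) 1 (unary_op f).
Proof. by []. Qed.

Lemma val_e (k : nat) : k < 3 -> val (e k) = k.
Proof. exact: inordK. Qed.

Lemma eq_e (j k : nat) : j < 3 -> k < 3 -> (e j == e k) = (j == k).
Proof. by move=> j3 k3; rewrite -val_eqE /= !val_e. Qed.

Lemma T_neq2 (x : 'I_4 -> A3) : T x != e 2.
Proof. by rewrite /T; case: ifP => _; apply/eqP => /(congr1 val); rewrite !val_e. Qed.

Lemma T_eq0 (c : A3) (x : 'I_4 -> A3) : (forall i, x i \in [:: e 0; c]) -> T x = e 0.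
Proof.
move=> xP; rewrite /T; case: ifP => // T_eq1.
have [x0_eq1 x3_eq2] : val (x (inord 0)) = 1 /\ val (x (inord 3)) = 2.
  by case/orP: T_eq1 => /and4P[/eqP-> _ _ /eqP->].
have := xP (inord 0); have := xP (inord 3); rewrite !inE.
by case/orP=> /eqP x3; case/orP=> /eqP x0; move: x0_eq1 x3_eq2;
  rewrite x0 x3 ?val_e // => ->.
Qed.

Definition at_two (c a : A3) : A3 := if a == e 2 then c else e 0.

Lemma at_two2 (c : A3) : at_two c (e 2) = c.
Proof. by rewrite /at_two eqxx. Qed.

Lemma at_two_neq2 (c a : A3) : a != e 2 -> at_two c a = e 0.
Proof. by rewrite /at_two => /negPf->. Qed.

Lemma at_two1 (c : A3) : at_two c (e 1) = e 0.
Proof. by rewrite at_two_neq2 ?eq_e. Qed.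

Lemma at_two_T (c : A3) (x : 'I_4 -> A3) : at_two c (T x) = T (at_two c \o x).
Proof.
rewrite at_two_neq2 ?T_neq2 // (@T_eq0 c) // => i /=.
by rewrite /at_two; case: ifP; rewrite !inE eqxx ?orbT.
Qed.

Lemma at_two_star1 (c : A3) : arity_part (star singletonT) 1 (unary_op (at_two c)).
Proof. by apply: unary_op_star1 => h ->; apply: commutes_unary_l => x; apply: at_two_T. Qed.

Lemma pair2_comp (f : A3 -> A3) (a b : A3) : f \o pair2 a b = pair2 (f a) (f b).
Proof. by apply: functional_extensionality => i; rewrite /= /pair2; case: ifP. Qed.

Lemma clone_T12_at_two (g : ('I_2 -> A3) -> A3) (c : A3) (x : 'I_2 -> A3) :
  clone_T12 (mkop g) -> g (at_two c \o x) = at_two c (g x).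
Proof. by case=> -[_ gP] _; apply/commutes_unary_r/gP/at_two_star1. Qed.

Lemma clone_T12_left0 (g : ('I_2 -> A3) -> A3) (c : A3) :
  clone_T12 (mkop g) -> g (pair2 (e 0) c) = at_two c (g (pair2 (e 1) (e 2))).
Proof. by move=> gP; rewrite -(clone_T12_at_two c _ gP) pair2_comp at_two1 at_two2. Qed.

Lemma clone_T12_right0 (g : ('I_2 -> A3) -> A3) (c : A3) :
  clone_T12 (mkop g) -> g (pair2 c (e 0)) = at_two c (g (pair2 (e 2) (e 1))).
Proof. by move=> gP; rewrite -(clone_T12_at_two c _ gP) pair2_comp at_two1 at_two2. Qed.

Theorem lemma3p9 (g : ('I_2 -> A3) -> A3) :
  clone_T12 (mkop g) ->
  [/\ (g (pair2 (e 1) (e 2)) = e 2 -> forall a : A3, g (pair2 (e 0) a) = a),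
      (g (pair2 (e 2) (e 1)) = e 2 -> forall a : A3, g (pair2 a (e 0)) = a),
      (g (pair2 (e 1) (e 2)) \in [:: e 0; e 1] -> forall a : A3, g (pair2 (e 0) a) = e 0)
    & (g (pair2 (e 2) (e 1)) \in [:: e 0; e 1] -> forall a : A3, g (pair2 a (e 0)) = e 0)].
Proof.
move=> gP; have neq2 (y : A3) : y \in [:: e 0; e 1] -> y != e 2.
  by rewrite !inE => /orP[]/eqP->; rewrite eq_e.
split=> [g12 a | g21 a | /neq2 g12 a | /neq2 g21 a].
- by rewrite clone_T12_left0 // g12 at_two2.
- by rewrite clone_T12_right0 // g21 at_two2.
- by rewrite clone_T12_left0 // at_two_neq2.
- by rewrite clone_T12_right0 // at_two_neq2.
Qed.
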